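(* Let $M\ge 2$, $\gamma_r\ge 0$ and $K>0$, and let $p_r(i)=i^{-\gamma_r}/\sum_{j=1}^M j^{-\gamma_r}$. Put $b=\gamma_r/K$, and suppose $b\le[M\log M-\log(M!)]^{-1}$. Then the maximizer of $$\sum_{i=1}^M p_r(i)\big(1-e^{-K p_c(i)}\big)$$ over probability vectors $(p_c(1),\dots,p_c(M))$ is $$p_c(i)=a_i+b\log\Big(\frac{i+1}{i}\Big),\qquad a_i=\frac1M+\frac bM\sum_{j=1}^M\log\Big(\frac{j}{i+1}\Big),\qquad i=1,\dots,M.$$ Equivalently, $p_c(i)=\frac1M+\frac bM\sum_{j=1}^M\log(j/i)$, and these values are nonnegative and sum to $1$. In the application, $K=\frac{\pi\lambda_t\beta({\rm T},4)}{\sqrt{\mu{\rm T}\sigma^2}}$, so that $b=\frac{\sqrt{\mu{\rm T}\sigma^2}\,\gamma_r}{\pi\lambda_t\beta({\rm T},4)}$.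
   Context: The objective is an approximation of the sequential density of successful receptions for Rayleigh fading, arbitrary noise $\sigma^2>0$ and path loss exponent $\alpha=4$. It is obtained by replacing the Gaussian tail function in $$p_{\rm cov}({\rm T},\lambda_t p_c(i),4)=\frac{\sqrt{2\pi}}{\beta({\rm T},4)}\,x\,{\rm Q}(x)e^{x^2/2},\qquad x=\frac{\pi\lambda_t p_c(i)\beta({\rm T},4)}{\sqrt{2\mu{\rm T}\sigma^2}},$$ with the approximation ${\rm Q}(x)\approx\frac{(1-e^{-1.4x})e^{-x^2/2}}{1.135\sqrt{2\pi}\,x}$. This gives $$p_{\rm cov}\approx\frac{1}{1.135\,\beta({\rm T},4)}\Big(1-e^{-\pi\lambda_t p_c(i)\beta({\rm T},4)/\sqrt{\mu{\rm T}\sigma^2}}\Big).$$ Here $\lambda_t$ is the transmitter intensity, $\beta({\rm T},4)=1+\sqrt{\rm T}\arctan\sqrt{\rm T}$, $1/\mu$ is the transmit power, and $p_r$ and $p_c$ are the request and caching probability mass functions over $M$ files. *)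

From Stdlib Require Import Reals Lra.
Open Scope R_scope.

Definition sum1 (M : nat) (g : nat -> R) : R :=
  sum_f_R0 (fun k => g (S k)) (pred M).

Definition p_r (M : nat) (gr : R) (i : nat) : R :=
  Rpower (INR i) (- gr) / sum1 M (fun j => Rpower (INR j) (- gr)).

Definition objective (M : nat) (gr K : R) (pc : nat -> R) : R :=
  sum1 M (fun i => p_r M gr i * (1 - exp (- K * pc i))).

Definition prob_vec (M : nat) (pc : nat -> R) : Prop :=
  (forall i, (1 <= i <= M)%nat -> 0 <= pc i) /\ sum1 M pc = 1.

Definition a_coef (M : nat) (b : R) (i : nat) : R :=
  1 / INR M + b / INR M * sum1 M (fun j => ln (INR j / INR (S i))).

Definition pc_opt (M : nat) (b : R) (i : nat) : R :=
  a_coef M b i + b * ln (INR (S i) / INR i).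

From Stdlib Require Import Reals Arith Factorial Lra Lia.
Open Scope R_scope.

(* The objective y |-> sum_i p_i (1 - exp(-K y_i)) is strictly concave, so a point x on the
   simplex whose marginal gains K p_i exp(-K x_i) are all equal is its unique maximiser:
   each term lies below its tangent at x_i, and the tangent terms sum to a constant
   because they share the slope and sum y = sum x.  For the Zipf weights
   p_i ~ i^{-gamma_r}, equal marginals mean x_i = c - b log i with b = gamma_r / K, and c
   is fixed by sum x = 1; the bound on b is exactly what keeps x_M >= 0. *)

Lemma ln_Rdiv (x y : R) : 0 < x -> 0 < y -> ln (x / y) = ln x - ln y.
Proof.
  intros Hx Hy; unfold Rdiv.
  rewrite ln_mult, ln_Rinv; [ring | exact Hy | exact Hx | apply Rinv_0_lt_compat, Hy].
Qed.

Lemma sum_f_R0_pos (f : nat -> R) (n : nat) :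
  (forall k, 0 < f k) -> 0 < sum_f_R0 f n.
Proof.
  intros Hf; induction n as [|n IH]; simpl; [apply Hf|].
  specialize (Hf (S n)); lra.
Qed.

Lemma sum_f_R0_nonneg (f : nat -> R) (n : nat) :
  (forall k, (k <= n)%nat -> 0 <= f k) -> 0 <= sum_f_R0 f n.
Proof.
  induction n as [|n IH]; intros Hf; simpl; [apply Hf; lia|].
  assert (0 <= sum_f_R0 f n) by (apply IH; intros; apply Hf; lia).
  assert (0 <= f (S n)) by (apply Hf; lia).
  lra.
Qed.

Lemma sum_f_R0_nonneg_eq0 (f : nat -> R) (n : nat) :
  (forall k, (k <= n)%nat -> 0 <= f k) -> sum_f_R0 f n = 0 ->
  forall k, (k <= n)%nat -> f k = 0.
Proof.
  induction n as [|n IH]; intros Hf Hsum k Hk; simpl in Hsum.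
  - replace k with 0%nat by lia; exact Hsum.
  - assert (0 <= sum_f_R0 f n) by (apply sum_f_R0_nonneg; intros; apply Hf; lia).
    assert (0 <= f (S n)) by (apply Hf; lia).
    destruct (Nat.eq_dec k (S n)) as [->|Hne]; [lra|].
    apply IH; [intros; apply Hf; lia | lra | lia].
Qed.

Section Sum1.

Variable M : nat.
(* [sum1 0 g] is [g 1] rather than [0], hence the assumption [1 <= M]. *)
Hypothesis M_pos : (1 <= M)%nat.

Lemma sum1_ext (f g : nat -> R) :
  (forall i, (1 <= i <= M)%nat -> f i = g i) -> sum1 M f = sum1 M g.
Proof. intros Hfg; apply sum_eq; intros k Hk; apply Hfg; lia. Qed.

Lemma sum1_minus (f g : nat -> R) :
  sum1 M (fun i => f i - g i) = sum1 M f - sum1 M g.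
Proof. apply minus_sum. Qed.

Lemma sum1_plus (f g : nat -> R) :
  sum1 M (fun i => f i + g i) = sum1 M f + sum1 M g.
Proof. apply plus_sum. Qed.

Lemma sum1_const (c : R) : sum1 M (fun _ => c) = INR M * c.
Proof.
  unfold sum1; rewrite sum_cte, Nat.succ_pred_pos by lia; ring.
Qed.

Lemma sum1_scal (c : R) (f : nat -> R) : sum1 M (fun i => c * f i) = c * sum1 M f.
Proof.
  unfold sum1; rewrite scal_sum; apply sum_eq; intros; ring.
Qed.

Lemma sum1_nonneg (f : nat -> R) :
  (forall i, (1 <= i <= M)%nat -> 0 <= f i) -> 0 <= sum1 M f.
Proof. intros Hf; apply sum_f_R0_nonneg; intros k Hk; apply Hf; lia. Qed.

Lemma sum1_nonneg_eq0 (f : nat -> R) :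
  (forall i, (1 <= i <= M)%nat -> 0 <= f i) -> sum1 M f = 0 ->
  forall i, (1 <= i <= M)%nat -> f i = 0.
Proof.
  intros Hf Hsum i Hi.
  replace i with (S (pred i)) by lia.
  apply (sum_f_R0_nonneg_eq0 (fun k => f (S k)) (pred M)); [| exact Hsum | lia].
  intros k Hk; apply Hf; lia.
Qed.

Lemma sum1_ln_INR : sum1 M (fun j => ln (INR j)) = ln (INR (fact M)).
Proof.
  destruct M as [|n]; [lia|]; unfold sum1; simpl pred; clear M_pos.
  induction n as [|n IH]; [reflexivity|].
  rewrite tech5, IH.
  change (fact (S (S n))) with (S (S n) * fact (S n))%nat.
  rewrite mult_INR, ln_mult; [ring | apply lt_0_INR; lia | apply lt_0_INR, lt_O_fact].
Qed.

Lemma sum1_ln_div (a : R) :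
  0 < a -> sum1 M (fun j => ln (INR j / a)) = ln (INR (fact M)) - INR M * ln a.
Proof.
  intros Ha.
  rewrite (sum1_ext _ (fun j => ln (INR j) - ln a)), sum1_minus, sum1_ln_INR, sum1_const;
    [reflexivity|].
  intros j Hj; apply ln_Rdiv; [apply lt_0_INR; lia | exact Ha].
Qed.

End Sum1.

Definition exp_utility (M : nat) (K : R) (p y : nat -> R) : R :=
  sum1 M (fun i => p i * (1 - exp (- K * y i))).

Section EqualMarginals.

Variables (M : nat) (K lam : R) (p x : nat -> R).
Hypothesis M_pos : (1 <= M)%nat.
Hypothesis K_neq0 : K <> 0.
Hypothesis lam_pos : 0 < lam.
Hypothesis marginals_eq : forall i, (1 <= i <= M)%nat -> p i * exp (- K * x i) = lam.

(* How far the i-th term of the utility at [y] lies below its tangent at [x]. *)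
Definition tangent_gap (y : nat -> R) (i : nat) : R :=
  p i * exp (- K * x i) * (exp (- K * (y i - x i)) - 1 + K * (y i - x i)).

Lemma tangent_gap_nonneg (y : nat -> R) (i : nat) :
  (1 <= i <= M)%nat -> 0 <= tangent_gap y i.
Proof.
  intros Hi; unfold tangent_gap; rewrite marginals_eq by exact Hi.
  pose proof (exp_ineq1_le (- K * (y i - x i))).
  apply Rmult_le_pos; lra.
Qed.

Lemma tangent_gap_eq0 (y : nat -> R) (i : nat) :
  (1 <= i <= M)%nat -> tangent_gap y i = 0 -> y i = x i.
Proof.
  intros Hi; unfold tangent_gap; rewrite marginals_eq by exact Hi; intros H0.
  destruct (Req_dec (- K * (y i - x i)) 0) as [Ht|Ht].
  - apply Rmult_integral in Ht as [|]; [exfalso; apply K_neq0 |]; lra.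
  - pose proof (exp_ineq1 _ Ht).
    apply Rmult_integral in H0 as [|]; lra.
Qed.

Lemma sum1_tangent_gap (y : nat -> R) :
  sum1 M y = sum1 M x -> sum1 M (tangent_gap y) = exp_utility M K p x - exp_utility M K p y.
Proof.
  intros Hsum; unfold exp_utility.
  rewrite (sum1_ext M M_pos _ (fun i => (p i * (1 - exp (- K * x i)) + K * lam * y i)
                                      - (p i * (1 - exp (- K * y i)) + K * lam * x i))).
  - rewrite sum1_minus, !sum1_plus, !sum1_scal, Hsum; ring.
  - intros i Hi; unfold tangent_gap.
    replace (exp (- K * y i)) with (exp (- K * x i) * exp (- K * (y i - x i)))
      by (rewrite <- exp_plus; f_equal; ring).
    rewrite <- (marginals_eq i Hi); ring.
Qed.

Lemma exp_utility_le_of_marginals_eq (y : nat -> R) :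
  sum1 M y = sum1 M x -> exp_utility M K p y <= exp_utility M K p x.
Proof.
  intros Hsum.
  pose proof (sum1_nonneg M M_pos _ (tangent_gap_nonneg y)).
  rewrite sum1_tangent_gap in * by exact Hsum; lra.
Qed.

Lemma eq_of_exp_utility_marginals_eq (y : nat -> R) :
  sum1 M y = sum1 M x -> exp_utility M K p y = exp_utility M K p x ->
  forall i, (1 <= i <= M)%nat -> y i = x i.
Proof.
  intros Hsum Hobj i Hi; apply tangent_gap_eq0; [exact Hi|].
  apply (sum1_nonneg_eq0 M M_pos); [exact (tangent_gap_nonneg y) | | exact Hi].
  rewrite sum1_tangent_gap by exact Hsum; lra.
Qed.

End EqualMarginals.

Definition pc_level (M : nat) (b : R) : R :=
  1 / INR M + b / INR M * ln (INR (fact M)).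

Section OptimalCaching.

Variables (M : nat) (b : R).
Hypothesis M_pos : (1 <= M)%nat.

Lemma pc_opt_log_form (i : nat) :
  (1 <= i)%nat -> pc_opt M b i = pc_level M b - b * ln (INR i).
Proof.
  intros Hi; assert (0 < INR M) by (apply lt_0_INR; lia).
  unfold pc_opt, a_coef, pc_level.
  rewrite sum1_ln_div, ln_Rdiv by (auto; apply lt_0_INR; lia).
  field; lra.
Qed.

Lemma pc_opt_closed_form (i : nat) :
  (1 <= i)%nat ->
  pc_opt M b i = 1 / INR M + b / INR M * sum1 M (fun j => ln (INR j / INR i)).
Proof.
  intros Hi; assert (0 < INR M) by (apply lt_0_INR; lia).
  rewrite pc_opt_log_form, sum1_ln_div by (auto; apply lt_0_INR; lia).
  unfold pc_level; field; lra.
Qed.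

Lemma sum1_pc_opt : sum1 M (pc_opt M b) = 1.
Proof.
  assert (0 < INR M) by (apply lt_0_INR; lia).
  rewrite (sum1_ext M M_pos _ (fun i => pc_level M b - b * ln (INR i)))
    by (intros; apply pc_opt_log_form; lia).
  rewrite sum1_minus, sum1_const, sum1_scal, sum1_ln_INR by exact M_pos.
  unfold pc_level; field; lra.
Qed.

Lemma pc_opt_nonneg (i : nat) :
  0 <= b -> b <= / (INR M * ln (INR M) - ln (INR (fact M))) ->
  (1 <= i <= M)%nat -> 0 <= pc_opt M b i.
Proof.
  intros Hb0 Hb Hi.
  set (D := INR M * ln (INR M) - ln (INR (fact M))) in Hb.
  assert (HM : 0 < INR M) by (apply lt_0_INR; lia).
  assert (HbD : b * D <= 1).
  { destruct (Rle_dec D 0) as [HD|HD]; [nra|].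
    apply Rmult_le_compat_r with (r := D) in Hb; [|lra].
    rewrite Rinv_l in Hb; lra. }
  assert (Hln : ln (INR i) <= ln (INR M)).
  { destruct (Nat.eq_dec i M) as [->|Hne]; [lra|].
    left; apply ln_increasing; [apply lt_0_INR | apply lt_INR]; lia. }
  rewrite pc_opt_log_form by lia.
  assert (pc_level M b - b * ln (INR M) = (1 - b * D) / INR M)
    by (unfold pc_level, D; field; lra).
  assert (0 <= (1 - b * D) / INR M) by (apply Rle_mult_inv_pos; lra).
  nra.
Qed.

End OptimalCaching.

(* With [b = gr / K], the factor [i^{-gr}] of [p_r] cancels [exp (K b ln i)]. *)
Lemma p_r_marginal_pc_opt (M : nat) (gr K : R) (i : nat) :
  (1 <= M)%nat -> 0 < K -> (1 <= i)%nat ->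
  p_r M gr i * exp (- K * pc_opt M (gr / K) i)
  = exp (- K * pc_level M (gr / K)) / sum1 M (fun j => Rpower (INR j) (- gr)).
Proof.
  intros HM HK Hi.
  rewrite pc_opt_log_form by assumption.
  unfold p_r, Rpower, Rdiv.
  rewrite Rmult_assoc, (Rmult_comm (/ _)), <- Rmult_assoc, <- exp_plus.
  f_equal; f_equal; field; lra.
Qed.

Theorem lemma7 (M : nat) (gr K : R) :
  (2 <= M)%nat -> 0 <= gr -> 0 < K ->
  gr / K <= / (INR M * ln (INR M) - ln (INR (fact M))) ->
  let b := gr / K in
  (forall i, (1 <= i <= M)%nat ->
     pc_opt M b i = 1 / INR M + b / INR M * sum1 M (fun j => ln (INR j / INR i))) /\
  prob_vec M (pc_opt M b) /\
  (forall pc, prob_vec M pc -> objective M gr K pc <= objective M gr K (pc_opt M b)) /\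
  (forall pc, prob_vec M pc -> objective M gr K pc = objective M gr K (pc_opt M b) ->
     forall i, (1 <= i <= M)%nat -> pc i = pc_opt M b i).
Proof.
  intros HM Hgr HK Hb b.
  assert (HM1 : (1 <= M)%nat) by lia.
  assert (Hb0 : 0 <= b) by (apply Rle_mult_inv_pos; lra).
  set (lam := exp (- K * pc_level M b) / sum1 M (fun j => Rpower (INR j) (- gr))).
  assert (Hlam : 0 < lam).
  { apply Rdiv_lt_0_compat; [apply exp_pos|].
    apply sum_f_R0_pos; intros; apply exp_pos. }
  assert (Hmarg : forall i, (1 <= i <= M)%nat ->
            p_r M gr i * exp (- K * pc_opt M b i) = lam)
    by (intros i Hi; apply p_r_marginal_pc_opt; [exact HM1 | exact HK | lia]).
  assert (Hsum : forall pc, prob_vec M pc -> sum1 M pc = sum1 M (pc_opt M b))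
    by (intros pc [_ ->]; symmetry; apply sum1_pc_opt; exact HM1).
  split; [intros; apply pc_opt_closed_form; lia|].
  split; [split; [intros; apply pc_opt_nonneg; assumption | apply sum1_pc_opt; exact HM1]|].
  assert (HK0 : K <> 0) by lra.
  split; intros pc Hpc.
  - exact (exp_utility_le_of_marginals_eq M K lam _ _ HM1 Hlam Hmarg pc (Hsum pc Hpc)).
  - exact (eq_of_exp_utility_marginals_eq M K lam _ _ HM1 HK0 Hlam Hmarg pc (Hsum pc Hpc)).
Qed.
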